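(* Fix a slot $n$ and a state $(\mathbf x(n),\mathbf g(n))$ of the model in the context. Let $\pi\in\Pi$ choose the feasible withdrawal vector $\mathbf y(n)$ at slot $n$, let $\mathbf y^{MB}(n)$ be the withdrawal vector chosen by an MB policy at the same slot in the same state, and let $\mathbf D=\mathbf y^{MB}(n)-\mathbf y(n)\in\mathbb Z^{L+1}$. Then (a) if $\mathbf D=0$, $\pi$ has the MB property at time $n$; and (b) if $\pi$ has the MB property at time $n$, every component of $\mathbf D$ equals $0$, $+1$ or $-1$.
   Context: Model: slotted time; real queues $1,\dots,L$, dummy queue $0$, $K$ identical servers. In slot $n$ the state is $(\mathbf x(n),\mathbf g(n))$: $x_i(n)\in\mathbb Z_+$ queue lengths ($x_0=0$), $g_{i,j}(n)\in\{0,1\}$ connectivity of queue $i$ to server $j$, with $g_{0,j}=1$. A scheduling control $\mathbf q\in\{0,\dots,L\}^K$ assigns server $j$ to queue $q_j$ ($0$ = idle); it is feasible if $g_{q_j,j}=1$ for all $j$ and for each $i\ge1$ at most $x_i$ servers are assigned to $i$. Its withdrawal vector is $y_i=\#\{j:q_j=i\}$, $i=0,\dots,L$; feasible withdrawal vectors are those arising from feasible $\mathbf q$; their set is $\mathcal Y(\mathbf x,\mathbf g)$. A policy chooses at each slot a feasible withdrawal vector as a measurable function of the history; $\Pi$ is the set of policies. Updated sizes: $\hat x_i(n)=x_i(n)-y_i(n)$ (so $\hat x_0(n)=-y_0(n)$). Imbalance index: $\kappa_n(\pi)=\sum_{i=1}^{L}\sum_{j=i+1}^{L+1}(\hat x_{[i]}(n)-\hat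 x_{[j]}(n))$, where $[1],\dots,[L]$ order the real queues by non-increasing $\hat x$ and $[L+1]=0$. $\pi$ has the MB property at time $n$ if its $\mathbf y(n)$ minimizes $\kappa_n$ over $\mathcal Y(\mathbf x(n),\mathbf g(n))$; an MB policy has the MB property at every slot. *)

From mathcomp Require Import all_boot all_order all_algebra.
Set Implicit Arguments. Unset Strict Implicit. Unset Printing Implicit Defensive.
Import Order.TTheory GRing.Theory Num.Theory.
Local Open Scope ring_scope.

(* Queues are indexed by 'I_(L.+1): index ord0 is the dummy queue 0,
   indices 1..L are the real queues. Servers are indexed by 'I_K.
   x : queue lengths, g : connectivity (g i j = queue i connected to server j). *)

Definition feasible_control (L K : nat) (x : 'I_L.+1 -> nat)
  (g : 'I_L.+1 -> 'I_K -> bool) (q : 'I_K -> 'I_L.+1) : Prop :=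
  (forall j : 'I_K, g (q j) j) /\
  (forall i : 'I_L.+1, i != ord0 -> (#|[pred j | q j == i]| <= x i)%N).

Definition withdrawal (L K : nat) (q : 'I_K -> 'I_L.+1) : 'I_L.+1 -> nat :=
  fun i => #|[pred j | q j == i]|.

Definition feasible_withdrawal (L K : nat) (x : 'I_L.+1 -> nat)
  (g : 'I_L.+1 -> 'I_K -> bool) (y : 'I_L.+1 -> nat) : Prop :=
  exists q : 'I_K -> 'I_L.+1,
    feasible_control x g q /\ forall i, y i = withdrawal q i.

(* updated sizes  xhat_i = x_i - y_i  (in int; xhat_0 = -y_0 since x_0 = 0) *)
Definition xhat (L : nat) (x y : 'I_L.+1 -> nat) (i : 'I_L.+1) : int :=
  (x i)%:Z - (y i)%:Z.

(* Imbalance index: sort the real queues by non-increasing xhat, append the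
   dummy queue 0 as position L+1, and sum xhat_[i] - xhat_[j] over
   1 <= i <= L, i < j <= L+1 (0-based positions below). *)
Definition imbalance (L : nat) (x y : 'I_L.+1 -> nat) : int :=
  let s := sort (fun a b : int => b <= a)
             [seq xhat x y i | i <- enum 'I_L.+1 & i != ord0] in
  let s' := rcons s (xhat x y ord0) in
  \sum_(0 <= i < L) \sum_(i.+1 <= j < L.+1) (s'`_i - s'`_j).

Definition MB_property (L K : nat) (x : 'I_L.+1 -> nat)
  (g : 'I_L.+1 -> 'I_K -> bool) (y : 'I_L.+1 -> nat) : Prop :=
  feasible_withdrawal x g y /\
  forall y' : 'I_L.+1 -> nat, feasible_withdrawal x g y' ->
    imbalance x y <= imbalance x y'.

(* Twice the imbalance index is the sum of |xhat c - xhat d| over pairs of real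
   queues plus twice the excess of the real queues over the dummy one; when the
   dummy queue has the least updated size, as for any feasible withdrawal, this
   is the total pairwise spread of xhat.  Shifting one unit of withdrawal
   between two queues whose updated sizes differ by at least two strictly
   lowers the spread.  If two MB vectors differed by two at a queue [a], an
   alternating-path exchange between their schedules yields, for each of them,
   a feasible one-unit shift between [a] and a common queue [b]; neither shift
   may improve, and the two resulting inequalities are incompatible. *)
From mathcomp Require Import all_boot all_order all_algebra.
From mathcomp Require Import zify lra.
From Stdlib Require Import FunctionalExtensionality.
Set Implicit Arguments. Unset Strict Implicit. Unset Printing Implicit Defensive.
Import Order.TTheory GRing.Theory Num.Theory.
Local Open Scope ring_scope.

Section Mixes.
Variables L K : nat.
Implicit Types q : 'I_K -> 'I_L.+1.
Local Open Scope nat_scope.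

Lemma withdrawalE q d : withdrawal q d = \sum_j (q j == d).
Proof.
rewrite /withdrawal -sum1_card big_mkcond /=.
by apply: eq_bigr => j _; rewrite inE; case: (q j == d).
Qed.

Definition reassign q j0 c : 'I_K -> 'I_L.+1 :=
  fun j => if j == j0 then c else q j.

Lemma withdrawal_reassign q j0 a c : q j0 = a ->
  forall d, withdrawal (reassign q j0 c) d + (d == a) = withdrawal q d + (d == c).
Proof.
move=> qj0 d; rewrite !withdrawalE (bigD1 j0) // [in RHS](bigD1 j0) //=.
rewrite /reassign eqxx qj0.
rewrite (eq_bigr (fun j => nat_of_bool (q j == d))) => [|j /negbTE -> //].
by rewrite [c == d]eq_sym [a == d]eq_sym; lia.
Qed.

Lemma exists_moved_server q q' a :
  withdrawal q' a < withdrawal q a -> exists2 j, q j = a & q' j != a.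
Proof.
move=> lt_a; case: (pickP [pred j | (q j == a) && (q' j != a)]) => [j|none].
  by case/andP=> /eqP; exists j.
suff /subset_leq_card : [pred j | q j == a] \subset [pred j | q' j == a].
  by rewrite /withdrawal leqNgt lt_a.
apply/subsetP => j; rewrite !inE => qj.
by move: (none j); rewrite /= qj /= => /negbFE.
Qed.

Definition mix_of q q' q1 := forall j, q1 j = q j \/ q1 j = q' j.

(* Alternating path: move a server from [a] to its [q'] queue [c]; stop if
   [q'] withdraws more than [q] from [c], otherwise continue from [c]. *)
Lemma withdrawal_exchange q q' a : withdrawal q' a < withdrawal q a ->
  exists b, [/\ b != a, withdrawal q b < withdrawal q' b &
    (exists2 q1, mix_of q q' q1 &
      forall d, withdrawal q1 d + (d == a) = withdrawal q d + (d == b))].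
Proof.
have [n] := ubnP #|[pred j | q j != q' j]|.
elim: n q a => // n IH q a lt_n lt_a.
have [j qj q'j] := exists_moved_server lt_a.
set c := q' j in q'j; set q2 := reassign q j c.
have w_q2 : forall d, withdrawal q2 d + (d == a) = withdrawal q d + (d == c).
  exact: withdrawal_reassign.
have c_a := negbTE q'j; have a_c : (a == c) = false by rewrite eq_sym.
have mix_q2 : mix_of q q' q2.
  by move=> i; rewrite /q2 /reassign; case: eqP => [->|_]; [right | left].
have [lt_c | le_c] := ltnP (withdrawal q c) (withdrawal q' c).
  by exists c; split=> //; exists q2.
have lt_c2 : withdrawal q' c < withdrawal q2 c.
  by move: (w_q2 c); rewrite eqxx c_a; lia.
have lt_n2 : #|[pred i | q2 i != q' i]| < n.
  have /subset_leq_card : [pred i | q2 i != q' i] \subset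
                          [predD1 [pred i | q i != q' i] & j].
    apply/subsetP => i; rewrite !inE /q2 /reassign.
    by case: (eqVneq i j) => [->|_]; rewrite ?eqxx.
  move: lt_n; rewrite (cardD1 j [pred i | q i != q' i]) inE qj a_c add1n ltnS.
  by move=> lt_n' le_n2; apply: leq_ltn_trans le_n2 lt_n'.
have [b [b_c lt_b [q3 mix_q3 w_q3]]] := IH q2 c lt_n2 lt_c2.
have b_a : b != a.
  by apply: contraTneq lt_b => ->; move: (w_q2 a); rewrite eqxx a_c; lia.
exists b; split=> //.
  by move: (w_q2 b); rewrite (negbTE b_a) (negbTE b_c); lia.
exists q3 => [i|d]; last by move: (w_q3 d) (w_q2 d); lia.
by case: (mix_q3 i) => ->; [exact: mix_q2 | right].
Qed.

Definition mix_complement q q' q1 : 'I_K -> 'I_L.+1 :=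
  fun j => if q1 j == q j then q' j else q j.

Lemma mix_of_complement q q' q1 : mix_of q q' (mix_complement q q' q1).
Proof. by move=> j; rewrite /mix_complement; case: ifP; [right | left]. Qed.

Lemma withdrawal_mix_complement q q' q1 : mix_of q q' q1 ->
  forall d, withdrawal q1 d + withdrawal (mix_complement q q' q1) d
            = withdrawal q d + withdrawal q' d.
Proof.
move=> mix d; rewrite !withdrawalE -!big_split; apply: eq_bigr => j _.
rewrite /mix_complement; case: (mix j) => ->; first by rewrite eqxx.
by case: (eqVneq (q' j) (q j)) => [->|_] //=; apply: addnC.
Qed.

Lemma feasible_mix x g q q' q1 :
  feasible_control x g q -> feasible_control x g q' -> mix_of q q' q1 ->
  (forall i, withdrawal q1 i <= maxn (withdrawal q i) (withdrawal q' i)) ->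
  feasible_control x g q1.
Proof.
move=> [con cap] [con' cap'] mix le_max; split=> [j|i i0].
  by case: (mix j) => ->.
apply: leq_trans (le_max i) _; rewrite geq_max.
by apply/andP; split; [exact: cap | exact: cap'].
Qed.

End Mixes.

Lemma feasible_withdrawal_exchange (L K : nat) (x : 'I_L.+1 -> nat)
    (g : 'I_L.+1 -> 'I_K -> bool) (y y' : 'I_L.+1 -> nat) a :
  feasible_withdrawal x g y -> feasible_withdrawal x g y' -> (y' a < y a)%N ->
  exists b, [/\ b != a, (y b < y' b)%N,
    (exists2 z, feasible_withdrawal x g z &
      forall d, (z d + (d == a) = y d + (d == b))%N) &
    (exists2 z', feasible_withdrawal x g z' &
      forall d, (z' d + (d == b) = y' d + (d == a))%N)].
Proof.
move=> [q [fq /functional_extensionality ->]].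
move=> [q' [fq' /functional_extensionality ->]] lt_a.
have [b [b_a lt_b [q1 mix_q1 w_q1]]] := withdrawal_exchange lt_a.
have w_q2 := withdrawal_mix_complement mix_q1.
have a_b : (a == b) = false by rewrite eq_sym (negbTE b_a).
exists b; split=> //.
  exists (withdrawal q1) => //; exists q1; split=> //.
  apply: feasible_mix fq fq' mix_q1 _ => d; move: (w_q1 d).
  by case: (eqVneq d b) => [->|_]; rewrite ?eqxx ?(negbTE b_a); lia.
exists (withdrawal (mix_complement q q' q1)) => [|d]; last by move: (w_q1 d) (w_q2 d); lia.
exists (mix_complement q q' q1); split=> //.
apply: feasible_mix fq fq' (mix_of_complement q q' q1) _ => d.
move: (w_q1 d) (w_q2 d).
by case: (eqVneq d a) => [->|_]; rewrite ?eqxx ?a_b; lia.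
Qed.

Lemma bigD2 (I : finType) (V : nmodType) (a b : I) (F : I -> V) : a != b ->
  \sum_c F c = F a + F b + \sum_(c | (c != a) && (c != b)) F c.
Proof.
move=> ab; rewrite (bigD1 a) //= (bigD1 b) 1?eq_sym //= addrA.
by congr (_ + _); apply: eq_bigl => c; rewrite andbC.
Qed.

Definition spread (I : finType) (h : I -> int) : int :=
  \sum_c \sum_d `|h c - h d|.

Lemma spread_transfer (I : finType) (h h' : I -> int) (a b : I) :
  a != b -> h' a = h a + 1 -> h' b = h b - 1 ->
  (forall c, c != a -> c != b -> h' c = h c) -> h a + 2 <= h b ->
  spread h' < spread h.
Proof.
move=> ab h'a h'b h'c gap.
have closer t : `|h' a - t| + `|h' b - t| <= `|h a - t| + `|h b - t|.
  by rewrite h'a h'b; lia.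
have rows_ab : \sum_d `|h' a - h' d| + \sum_d `|h' b - h' d|
               < \sum_d `|h a - h d| + \sum_d `|h b - h d|.
  rewrite -!big_split (bigD1 a) // [X in _ < X](bigD1 a) //=.
  apply: ltr_leD; first by rewrite !subrr h'a h'b; lia.
  apply: ler_sum => d da; case: (eqVneq d b) => [->|db].
    by rewrite !subrr h'a h'b; lia.
  by rewrite (h'c d).
have row_c c : c != a -> c != b -> \sum_d `|h' c - h' d| <= \sum_d `|h c - h d|.
  move=> ca cb; rewrite (bigD2 _ ab) [X in _ <= X](bigD2 _ ab) h'c //.
  rewrite (eq_bigr (fun d => `|h c - h d|)) => [|d /andP[da db]]; last by rewrite h'c.
  by rewrite lerD2r ![`|h c - _|]distrC; apply: closer.
rewrite /spread (bigD2 _ ab) [X in _ < X](bigD2 _ ab).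
apply: ltr_leD => //; apply: ler_sum => c /andP[]; exact: row_c.
Qed.

Lemma spread_ord0 (n : nat) (h : 'I_n.+1 -> int) :
  spread h = \sum_(c | c != ord0) \sum_(d | d != ord0) `|h c - h d|
             + (\sum_(c | c != ord0) `|h c - h ord0|) *+ 2.
Proof.
rewrite /spread (bigD1 ord0) //= (bigD1 ord0) //= subrr normr0 add0r.
under [X in _ + X = _]eq_bigr => c _ do rewrite (bigD1 ord0) //=.
rewrite big_split /= mulr2n.
under [X in X + _ = _]eq_bigr => c _ do rewrite distrC.
by rewrite addrA addrC.
Qed.

Definition gap_sum (s : seq int) (n : nat) : int :=
  \sum_(0 <= i < n) \sum_(i.+1 <= j < n.+1) (s`_i - s`_j).

Lemma gap_sum_cons (u : int) s n :
  gap_sum (u :: s) n.+1 = \sum_(0 <= j < n.+1) (u - s`_j) + gap_sum s n.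
Proof.
rewrite /gap_sum big_ltn // big_add1 /= big_add1 /=.
by congr (_ + _); apply: eq_bigr => i _; rewrite big_add1.
Qed.

Lemma gap_sum_sorted (u0 : int) (s : seq int) :
  sorted (fun u v : int => v <= u) s ->
  gap_sum (rcons s u0) (size s) *+ 2
    = \sum_(u <- s) \sum_(v <- s) `|u - v| + (\sum_(u <- s) (u - u0)) *+ 2.
Proof.
elim: s => [|u s IH] sorted_us; first by rewrite /gap_sum big_geq // !big_nil.
have sorted_s := path_sorted sorted_us.
have u_max : all (fun v => v <= u) s.
  apply: (order_path_min (leT := fun u v : int => v <= u)) sorted_us.
  by move=> ? ? ? /= ? /le_trans; apply.
have row_u : \sum_(0 <= j < (size s).+1) (u - (rcons s u0)`_j)
             = \sum_(v <- s) `|u - v| + (u - u0).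
  rewrite -(size_rcons s u0) -(big_nth 0 predT (fun v => u - v)) /=.
  rewrite -cats1 big_cat /= big_seq1; congr (_ + _).
  rewrite big_seq_cond [RHS]big_seq_cond; apply: eq_bigr => v /andP[sv _].
  by rewrite ger0_norm // subr_ge0; move/allP: u_max => /(_ v sv).
have col_u : \sum_(v <- s) \sum_(w <- u :: s) `|v - w|
             = \sum_(v <- s) `|u - v| + \sum_(v <- s) \sum_(w <- s) `|v - w|.
  under eq_bigr do rewrite big_cons.
  by rewrite big_split /=; congr (_ + _); apply: eq_bigr => v _; rewrite distrC.
rewrite /= gap_sum_cons mulrnDl IH // row_u !big_cons subrr normr0 add0r col_u.
rewrite !mulrnDl; lra.
Qed.

Lemma imbalance_mul2n (L : nat) (x y : 'I_L.+1 -> nat) :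
  let h := xhat x y in
  imbalance x y *+ 2 = \sum_(c | c != ord0) \sum_(d | d != ord0) `|h c - h d|
                       + (\sum_(c | c != ord0) (h c - h ord0)) *+ 2.
Proof.
move=> h; set hs := [seq h i | i <- enum 'I_L.+1 & i != ord0].
set s := sort (fun u v : int => v <= u) hs.
have size_s : size s = L.
  rewrite size_sort size_map -sum1_size big_filter big_enum_cond sum1_card.
  rewrite -[RHS]/(L.+1.-1) -[in RHS](card_ord L.+1) -(cardC1 (@ord0 L)).
  by apply: eq_card => i; rewrite !inE.
have perm_s : perm_eq s hs by rewrite perm_sort.
have -> : imbalance x y = gap_sum (rcons s (h ord0)) (size s) by rewrite size_s.
rewrite gap_sum_sorted; last first.
  by apply: sort_sorted => u v; exact: le_total.
rewrite (perm_big _ perm_s) (perm_big _ perm_s).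
under eq_bigr do rewrite (perm_big _ perm_s) /hs big_map big_filter big_enum_cond.
by rewrite /hs !big_map !big_filter !big_enum_cond.
Qed.

Lemma imbalance_le_spread (L : nat) (x y : 'I_L.+1 -> nat) :
  imbalance x y *+ 2 <= spread (xhat x y).
Proof.
rewrite imbalance_mul2n spread_ord0 lerD2l lerMn2r /=.
by apply: ler_sum => c _; exact: ler_norm.
Qed.

Lemma imbalance_eq_spread (L : nat) (x y : 'I_L.+1 -> nat) :
  (forall c, xhat x y ord0 <= xhat x y c) -> imbalance x y *+ 2 = spread (xhat x y).
Proof.
move=> ord0_min; rewrite imbalance_mul2n spread_ord0; congr (_ + _ *+ 2).
by apply: eq_bigr => c _; rewrite ger0_norm // subr_ge0.
Qed.

Lemma imbalance_transfer (L : nat) (x y z : 'I_L.+1 -> nat) a b :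
  a != b -> (forall c, xhat x y ord0 <= xhat x y c) ->
  (forall d, z d + (d == a) = y d + (d == b))%N ->
  xhat x y a + 2 <= xhat x y b -> imbalance x z < imbalance x y.
Proof.
move=> ab ord0_min zE gap.
have b_a : (b == a) = false by rewrite eq_sym (negbTE ab).
have: spread (xhat x z) < spread (xhat x y).
  apply: (spread_transfer ab _ _ _ gap).
  - by move: (zE a); rewrite eqxx (negbTE ab) /xhat; lia.
  - by move: (zE b); rewrite eqxx b_a /xhat; lia.
  by move=> c ca cb; move: (zE c); rewrite (negbTE ca) (negbTE cb) /xhat; lia.
have := imbalance_le_spread x z; have := imbalance_eq_spread ord0_min.
rewrite !mulr2n; lia.
Qed.

Lemma xhat_ord0_min (L K : nat) (x : 'I_L.+1 -> nat) (g : 'I_L.+1 -> 'I_K -> bool) y :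
  x ord0 = 0%N -> feasible_withdrawal x g y -> forall c, xhat x y ord0 <= xhat x y c.
Proof.
move=> x0 [q [[_ cap] yE]] c; rewrite /xhat x0.
have [->|c0] := eqVneq c ord0; first by rewrite x0.
by have := cap c c0; rewrite -/(withdrawal q c) -yE; lia.
Qed.

Lemma MB_withdrawal_gap (L K : nat) (x : 'I_L.+1 -> nat) (g : 'I_L.+1 -> 'I_K -> bool)
    (y1 y2 : 'I_L.+1 -> nat) a :
  x ord0 = 0%N -> MB_property x g y1 -> MB_property x g y2 -> (y1 a <= y2 a + 1)%N.
Proof.
move=> x0 [fy1 opt1] [fy2 opt2]; rewrite leqNgt; apply/negP => gap_a.
have lt_a : (y2 a < y1 a)%N by rewrite ltnW // -addn1.
have [b [b_a lt_b [z1 fz1 z1E] [z2 fz2 z2E]]] := feasible_withdrawal_exchange fy1 fy2 lt_a.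
have gap1 : xhat x y1 b < xhat x y1 a + 2.
  rewrite ltNge; apply/negP => gap.
  have a_b : a != b by rewrite eq_sym.
  by have := opt1 _ fz1; rewrite leNgt (imbalance_transfer a_b (xhat_ord0_min x0 fy1) z1E gap).
have gap2 : xhat x y2 a < xhat x y2 b + 2.
  rewrite ltNge; apply/negP => gap.
  by have := opt2 _ fz2; rewrite leNgt (imbalance_transfer b_a (xhat_ord0_min x0 fy2) z2E gap).
by move: gap1 gap2; rewrite /xhat; lia.
Qed.

Theorem lemma1 (L K : nat) (x : 'I_L.+1 -> nat) (g : 'I_L.+1 -> 'I_K -> bool)
  (y yMB : 'I_L.+1 -> nat) :
  x ord0 = 0%N ->
  (forall j : 'I_K, g ord0 j = true) ->
  feasible_withdrawal x g y ->
  MB_property x g yMB ->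
  ((forall i : 'I_L.+1, (yMB i)%:Z - (y i)%:Z = 0) -> MB_property x g y) /\
  (MB_property x g y ->
     forall i : 'I_L.+1, (yMB i)%:Z - (y i)%:Z \in [:: 0; 1; -1]).
Proof.
move=> x0 _ _ mbMB; split=> [D0 | mb i].
  suff -> : y = yMB by [].
  by apply: functional_extensionality => i; move: (D0 i); lia.
have := MB_withdrawal_gap i x0 mb mbMB; have := MB_withdrawal_gap i x0 mbMB mb.
by rewrite !inE; lia.
Qed.
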